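(* Let $E,r,\sigma>0$, $\gamma=\frac{2r}{\sigma^2}$, and write $f_2^*(\zeta;\gamma)$ for $f_2^*(\zeta)$ to indicate dependence on $\gamma$. Let $\gamma_0=\min\{\gamma>0 : \max_{\zeta>0}f_2^*(\zeta;\gamma)\le\pi\}$ (numerically $\gamma_0\approx0.0167821$). If $\gamma\ge\gamma_0$, then $f_2^*(\zeta;\gamma)\in[0,\pi]$ for every $\zeta>0$, and consequently $\frac{d^2}{d\tau^2}\varrho^{Zhu}(\tau)>0$ for all $\tau>0$; that is, $\tau\mapsto\varrho^{Zhu}(\tau)$ is convex.
   Context: Set $a=\frac{1+\gamma}{2}$, $b=\frac{1-\gamma}{2}$, and for $\zeta>0$ \[ f_1^*(\zeta)=\frac{1}{b^2+\zeta^2}\Big[b\ln\Big(\tfrac{1}{\gamma}\sqrt{a^2+\zeta^2}\Big)+\zeta\arctan(\zeta/a)\Big],\quad f_2^*(\zeta)=\frac{1}{b^2+\zeta^2}\Big[\zeta\ln\Big(\tfrac{1}{\gamma}\sqrt{a^2+\zeta^2}\Big)-b\arctan(\zeta/a)\Big]. \] Zhu's approximation of the early exercise boundary of the American put (as a function of time to maturity $\tau>0$) is \[ \varrho^{Zhu}(\tau)=\frac{\gamma E}{1+\gamma}+\frac{2E}{\pi}\int_0^\infty\frac{\zeta\,e^{-\tau\frac{\sigma^2}{2}(a^2+\zeta^2)}}{a^2+\zeta^2}\,e^{-f_1^*(\zeta)}\sin\big(f_2^*(\zeta)\big)\,d\zeta. \] *)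

From Stdlib Require Import Reals.
Open Scope R_scope.

Definition za (g : R) : R := (1 + g) / 2.
Definition zb (g : R) : R := (1 - g) / 2.

Definition f1star (g z : R) : R :=
  / (zb g ^ 2 + z ^ 2) *
  (zb g * ln (/ g * sqrt (za g ^ 2 + z ^ 2)) + z * atan (z / za g)).

Definition f2star (g z : R) : R :=
  / (zb g ^ 2 + z ^ 2) *
  (z * ln (/ g * sqrt (za g ^ 2 + z ^ 2)) - zb g * atan (z / za g)).

Definition improper_integral_0_inf (f : R -> R) (l : R) : Prop :=
  (forall T, 0 <= T -> exists _ : Riemann_integrable f 0 T, True) /\
  (forall eps, 0 < eps -> exists M, forall T (pr : Riemann_integrable f 0 T),
      M <= T -> Rabs (RiemannInt pr - l) < eps).

Definition zhu_integrand (sigma g tau z : R) : R :=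
  z * exp (- (tau * (sigma ^ 2 / 2) * (za g ^ 2 + z ^ 2))) / (za g ^ 2 + z ^ 2)
  * exp (- f1star g z) * sin (f2star g z).

(* rho is Zhu's early exercise boundary on tau > 0. *)
Definition is_rho_zhu (E sigma g : R) (rho : R -> R) : Prop :=
  forall tau, 0 < tau -> exists L,
    improper_integral_0_inf (zhu_integrand sigma g tau) L /\
    rho tau = g * E / (1 + g) + 2 * E / PI * L.

Definition is_gamma0 (g0 : R) : Prop :=
  0 < g0 /\ (forall z, 0 < z -> f2star g0 z <= PI) /\
  (forall g, 0 < g -> (forall z, 0 < z -> f2star g z <= PI) -> g0 <= g).

(* With w = zb g + i z and za g = g + zb g, the definitions of f1star and f2star say
     f1star - i f2star = Log (1 + w / g) / w = \int_0^1 dt / (g + t w),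
   so by the mean value theorem f1star and f2star are values of p / |g + t w|^2 and
   t z / |g + t w|^2 at some t in (0,1), where p = g + t zb g > 0.  Hence f1star >= 0,
   f2star > 0 for z > 0, and f2star is antitone in g since |g + t w| grows with g;
   thus f2star g <= f2star g0 <= PI.
   Zhu's boundary is affine in tau |-> \int_0^oo h z exp (- tau c (za g^2 + z^2)) dz
   with c = sigma^2 / 2 and h z = z / (za g^2 + z^2) exp (- f1star) sin f2star = O(z).
   Such Gaussian transforms may be differentiated under the integral sign, each
   derivative multiplying the weight by - c (za g^2 + z^2); the second derivative is
   positive because sin f2star >= 0 everywhere and h > 0 near 0. *)

From Stdlib Require Import Reals Lra Lia Psatz ClassicalEpsilon FunctionalExtensionality.
From Coquelicot Require Import Coquelicot.
Open Scope R_scope.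

Lemma continuity_pt_ex_derive f x : ex_derive f x -> continuity_pt f x.
Proof. intro Hf. apply derivable_continuous_pt, ex_derive_Reals_0, Hf. Qed.

Lemma continuity_pt_0_of_linear_bound f C :
  (forall z, Rabs (f z) <= C * Rabs z) -> continuity_pt f 0.
Proof.
  intros Hf eps Heps.
  assert (HC : 0 <= C) by (specialize (Hf 1); rewrite Rabs_R1 in Hf; pose proof (Rabs_pos (f 1)); lra).
  assert (Hf0 : f 0 = 0) by (specialize (Hf 0); rewrite Rabs_R0, Rmult_0_r in Hf;
    pose proof (Rabs_pos (f 0)); apply Rabs_eq_0; lra).
  exists (eps / (C + 1)). split; [apply Rdiv_lt_0_compat; lra|].
  intros x [_ Hx]. simpl in *. unfold Rdist in *. rewrite Hf0, Rminus_0_r in *.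
  apply Rle_lt_trans with (C * Rabs x); [apply Hf|].
  apply Rle_lt_trans with ((C + 1) * Rabs x); [pose proof (Rabs_pos x); nra|].
  apply (Rmult_lt_reg_r (/ (C + 1))); [apply Rinv_0_lt_compat; lra|].
  replace ((C + 1) * Rabs x * / (C + 1)) with (Rabs x) by (field; lra). exact Hx.
Qed.

Lemma derivable_pt_lim_locally_eq f g x l : derivable_pt_lim f x l ->
  (exists d, 0 < d /\ forall y, Rabs (y - x) < d -> g y = f y) -> derivable_pt_lim g x l.
Proof.
  intros Hf [d [Hd Hfg]] eps Heps. destruct (Hf eps Heps) as [d1 Hd1].
  assert (Hm : 0 < Rmin d d1) by (apply Rmin_pos; [lra | apply cond_pos]).
  exists (mkposreal _ Hm). intros h Hh0 Hh. simpl in Hh.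
  pose proof (Rmin_l d d1). pose proof (Rmin_r d d1).
  rewrite (Hfg (x + h)), (Hfg x).
  - apply Hd1; [exact Hh0 | lra].
  - rewrite Rminus_diag, Rabs_R0. exact Hd.
  - replace (x + h - x) with h by ring. lra.
Qed.

Lemma derivable_pt_lim_of_quadratic_remainder F x l d C : 0 < d ->
  (forall y, Rabs (y - x) <= d -> Rabs (F y - F x - (y - x) * l) <= C * (y - x) ^ 2) ->
  derivable_pt_lim F x l.
Proof.
  intros Hd HF eps Heps.
  set (C' := Rabs C + 1).
  assert (HC' : 0 < C') by (unfold C'; pose proof (Rabs_pos C); lra).
  assert (Hm : 0 < Rmin d (eps / C')) by (apply Rmin_pos; [lra | apply Rdiv_lt_0_compat; lra]).
  exists (mkposreal _ Hm). intros h Hh0 Hh. simpl in Hh.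
  pose proof (Rmin_l d (eps / C')). pose proof (Rmin_r d (eps / C')).
  assert (Hhp : 0 < Rabs h) by (apply Rabs_pos_lt; auto).
  specialize (HF (x + h)). replace (x + h - x) with h in HF by ring.
  assert (HR := HF ltac:(lra)).
  replace ((F (x + h) - F x) / h - l) with ((F (x + h) - F x - h * l) / h) by (field; auto).
  unfold Rdiv. rewrite Rabs_mult, Rabs_inv.
  apply (Rmult_lt_reg_r (Rabs h)); auto. rewrite Rmult_assoc, Rinv_l, Rmult_1_r by lra.
  apply Rle_lt_trans with (C' * (Rabs h * Rabs h)).
  - assert (Hsq : h ^ 2 = Rabs h * Rabs h) by (rewrite <- Rabs_mult, Rabs_right; [ring | nra]).
    rewrite <- Hsq. eapply Rle_trans; [apply HR|].
    apply Rmult_le_compat_r; [apply pow2_ge_0|]. pose proof (Rle_abs C). unfold C'; lra.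
  - assert (Rabs h * C' < eps).
    { apply (Rmult_lt_reg_r (/ C')); [apply Rinv_0_lt_compat; lra|].
      replace (Rabs h * C' * / C') with (Rabs h) by (field; lra). lra. }
    nra.
Qed.

Lemma Rabs_le_between_0 u c : Rmin 0 u <= c <= Rmax 0 u -> Rabs c <= Rabs u.
Proof.
  unfold Rmin, Rmax. destruct (Rle_dec 0 u); intros Hc;
  unfold Rabs; destruct (Rcase_abs c), (Rcase_abs u); lra.
Qed.

Lemma exp_le_compat x y : x <= y -> exp x <= exp y.
Proof. intros [H | ->]; [left; apply exp_increasing, H | lra]. Qed.

Lemma exp_sub_1_bound u : Rabs (exp u - 1) <= Rabs u * exp (Rabs u).
Proof.
  destruct (MVT_abs exp exp 0 u (fun c _ => derivable_pt_lim_exp c)) as [c [Hc Hcu]].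
  rewrite exp_0, Rminus_0_r, (Rabs_right (exp c)) in Hc by (left; apply exp_pos).
  rewrite Hc, Rmult_comm. apply Rmult_le_compat_l; [apply Rabs_pos|].
  apply exp_le_compat. pose proof (Rabs_le_between_0 u c Hcu). pose proof (Rle_abs c). lra.
Qed.

Lemma exp_taylor_1_bound u : Rabs (exp u - 1 - u) <= u ^ 2 * exp (Rabs u).
Proof.
  assert (Hd : forall c, derivable_pt_lim (fun v => exp v - 1 - v) c (exp c - 1)).
  { intro c. apply is_derive_Reals. auto_derive; [easy | ring]. }
  destruct (MVT_abs _ _ 0 u (fun c _ => Hd c)) as [c [Hc Hcu]].
  replace (exp 0 - 1 - 0) with 0 in Hc by (rewrite exp_0; ring).
  rewrite !Rminus_0_r in Hc. rewrite Hc.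
  pose proof (Rabs_le_between_0 u c Hcu).
  assert (Hsq : u ^ 2 = Rabs u * Rabs u) by (rewrite <- Rabs_mult, Rabs_right; [ring | nra]).
  rewrite Hsq, Rmult_assoc, (Rmult_comm (Rabs u) (exp _)), <- Rmult_assoc.
  apply Rmult_le_compat_r; [apply Rabs_pos|].
  eapply Rle_trans; [apply exp_sub_1_bound|].
  apply Rmult_le_compat; auto; [apply Rabs_pos | left; apply exp_pos | apply exp_le_compat; auto].
Qed.

Lemma le_exp_div nu w : 0 < nu -> w <= exp (nu * w) / nu.
Proof.
  intros Hnu. pose proof (exp_ineq1_le (nu * w)).
  apply (Rmult_le_reg_l nu); auto.
  replace (nu * (exp (nu * w) / nu)) with (exp (nu * w)) by (field; lra). lra.
Qed.

Lemma exp_second_order_bound tau tau0 y : 0 <= y -> 0 < tau0 -> Rabs (tau - tau0) <= tau0 / 2 ->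
  Rabs (exp (- (tau * y)) - exp (- (tau0 * y)) + (tau - tau0) * y * exp (- (tau0 * y)))
  <= (tau - tau0) ^ 2 * (8 / tau0) ^ 2 * exp (- (tau0 * y / 4)).
Proof.
  intros Hy Htau0 Htau.
  set (u := (tau0 - tau) * y).
  assert (Hu : Rabs u <= tau0 * y / 2).
  { unfold u. rewrite Rabs_mult, (Rabs_right y), Rabs_minus_sym by lra.
    replace (tau0 * y / 2) with (tau0 / 2 * y) by field. apply Rmult_le_compat_r; lra. }
  assert (Hu2 : u ^ 2 <= (tau - tau0) ^ 2 * ((8 / tau0) * exp (tau0 / 8 * y)) ^ 2).
  { replace (u ^ 2) with ((tau - tau0) ^ 2 * y ^ 2) by (unfold u; ring).
    apply Rmult_le_compat_l; [apply pow2_ge_0|]. apply pow_incr. split; [lra|].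
    eapply Rle_trans; [apply (le_exp_div (tau0 / 8)); lra | right; field; lra]. }
  replace (exp (- (tau * y)) - exp (- (tau0 * y)) + (tau - tau0) * y * exp (- (tau0 * y)))
    with (exp (- (tau0 * y)) * (exp u - 1 - u))
    by (replace (- (tau * y)) with (- (tau0 * y) + u) by (unfold u; ring); rewrite exp_plus; unfold u; ring).
  rewrite Rabs_mult, (Rabs_right (exp _)) by (left; apply exp_pos).
  eapply Rle_trans.
  { apply Rmult_le_compat_l; [left; apply exp_pos|]. eapply Rle_trans; [apply exp_taylor_1_bound|].
    apply Rmult_le_compat; [apply pow2_ge_0 | left; apply exp_pos | exact Hu2 | apply exp_le_compat, Hu]. }
  assert (E : exp (- (tau0 * y)) * (exp (tau0 / 8 * y) * exp (tau0 / 8 * y)) * exp (tau0 * y / 2)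
             = exp (- (tau0 * y / 4))) by (rewrite <- !exp_plus; f_equal; field).
  rewrite <- E. right. ring.
Qed.

(** * Improper integrals on [0, +oo) *)

Definition continuity_Riemann_integrable f (Hf : continuity f) a b :
  Riemann_integrable f a b.
Proof.
  destruct (Rle_dec a b) as [Hab | Hab].
  - apply continuity_implies_RiemannInt; auto.
  - apply RiemannInt_P1, continuity_implies_RiemannInt; [lra | auto].
Defined.

Lemma RiemannInt_antiderivative f F a b (pr : Riemann_integrable f a b) :
  a <= b -> (forall x, a <= x <= b -> continuity_pt f x) ->
  (forall x, a <= x <= b -> derivable_pt_lim F x (f x)) ->
  RiemannInt pr = F b - F a.
Proof.
  intros Hab Hf HF.
  rewrite (RiemannInt_P20 Hab (FTC_P1 Hab Hf) pr).
  assert (HF' : antiderivative f F a b).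
  { split; [|exact Hab]. intros x Hx. exists (exist _ (f x) (HF x Hx)). reflexivity. }
  destruct (antiderivative_Ucte f _ _ _ _ (RiemannInt_P29 Hab Hf) HF') as [C HC].
  rewrite (HC b), (HC a); [ring | lra | lra].
Qed.

Lemma RiemannInt_ge_const f a b m (pr : Riemann_integrable f a b) : a <= b ->
  (forall x, a < x < b -> m <= f x) -> m * (b - a) <= RiemannInt pr.
Proof.
  intros Hab Hm. rewrite <- (RiemannInt_P15 (RiemannInt_P14 a b m)).
  apply RiemannInt_P19; auto.
Qed.

Lemma limit_at_infinity_of_cauchy (I : R -> R) :
  (forall eps, 0 < eps -> exists M, forall S T, M <= S <= T -> Rabs (I T - I S) < eps) ->
  exists L, forall eps, 0 < eps -> exists M, forall T, M <= T -> Rabs (I T - L) < eps.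
Proof.
  intros HI.
  assert (HI' : forall eps, 0 < eps -> exists M, forall S T, M <= S -> M <= T -> Rabs (I T - I S) < eps).
  { intros eps Heps. destruct (HI eps Heps) as [M HM]. exists M. intros S T HS HT.
    destruct (Rle_dec S T); [apply HM; lra|].
    rewrite Rabs_minus_sym. apply HM; lra. }
  assert (Hc : Cauchy_crit (fun n => I (INR n))).
  { intros eps Heps. destruct (HI' eps Heps) as [M HM]. destruct (INR_unbounded M) as [N HN].
    exists N. intros n m Hn Hm. unfold Rdist.
    apply HM; apply Rle_trans with (INR N); try lra; apply le_INR; lia. }
  destruct (Rcomplete.R_complete _ Hc) as [L HL]. exists L.
  intros eps Heps. destruct (HI' (eps / 2) ltac:(lra)) as [M HM].
  destruct (HL (eps / 2) ltac:(lra)) as [N HN].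
  destruct (INR_unbounded (Rmax M (INR N))) as [n Hn].
  pose proof (Rmax_l M (INR N)). pose proof (Rmax_r M (INR N)).
  assert (HnN : (n >= N)%nat) by (apply INR_le; lra).
  specialize (HN n HnN). unfold Rdist in HN.
  exists M. intros T HT. specialize (HM (INR n) T ltac:(lra) HT).
  replace (I T - L) with ((I T - I (INR n)) + (I (INR n) - L)) by ring.
  eapply Rle_lt_trans; [apply Rabs_triang|]. lra.
Qed.

Lemma improper_integral_approx f L eps T0 : improper_integral_0_inf f L -> 0 < eps ->
  exists T (pr : Riemann_integrable f 0 T), 0 <= T /\ T0 <= T /\ Rabs (RiemannInt pr - L) < eps.
Proof.
  intros [Hint Hlim] Heps. destruct (Hlim eps Heps) as [M HM].
  set (T := Rmax 0 (Rmax T0 M)).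
  pose proof (Rmax_l 0 (Rmax T0 M)). pose proof (Rmax_r 0 (Rmax T0 M)).
  pose proof (Rmax_l T0 M). pose proof (Rmax_r T0 M).
  destruct (Hint T ltac:(unfold T; lra)) as [pr _].
  exists T, pr. unfold T in *. repeat split; try lra. apply HM. lra.
Qed.

Lemma improper_integral_ge f L m T0 : improper_integral_0_inf f L ->
  (forall T (pr : Riemann_integrable f 0 T), T0 <= T -> m <= RiemannInt pr) -> m <= L.
Proof.
  intros Hf Hm. destruct (Rle_dec m L) as [|Hn]; auto.
  destruct (improper_integral_approx f L (m - L) T0 Hf ltac:(lra)) as [T [pr [_ [HT HL]]]].
  specialize (Hm T pr HT). apply Rabs_def2 in HL. lra.
Qed.

Lemma improper_integral_abs_le f L K : improper_integral_0_inf f L ->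
  (forall T (pr : Riemann_integrable f 0 T), 0 <= T -> Rabs (RiemannInt pr) <= K) -> Rabs L <= K.
Proof.
  intros Hf HK. destruct (Rle_dec (Rabs L) K) as [|Hn]; auto.
  destruct (improper_integral_approx f L (Rabs L - K) 0 Hf ltac:(lra)) as [T [pr [HT [_ HL]]]].
  specialize (HK T pr HT).
  pose proof (Rabs_triang_inv L (RiemannInt pr)). rewrite Rabs_minus_sym in HL. lra.
Qed.

Lemma improper_integral_lin f g Lf Lg l :
  improper_integral_0_inf f Lf -> improper_integral_0_inf g Lg ->
  improper_integral_0_inf (fun x => f x + l * g x) (Lf + l * Lg).
Proof.
  intros [Hfi Hf] [Hgi Hg]. split.
  - intros T HT. destruct (Hfi T HT) as [pf _], (Hgi T HT) as [pg _].
    exists (RiemannInt_P10 l pf pg). exact I.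
  - intros eps Heps.
    set (e := eps / (2 * (Rabs l + 1))). pose proof (Rabs_pos l).
    assert (He : 0 < e) by (unfold e; apply Rdiv_lt_0_compat; lra).
    destruct (Hf e He) as [Mf HMf], (Hg e He) as [Mg HMg].
    exists (Rmax 0 (Rmax Mf Mg)). intros T pr HT.
    pose proof (Rmax_l 0 (Rmax Mf Mg)). pose proof (Rmax_r 0 (Rmax Mf Mg)).
    pose proof (Rmax_l Mf Mg). pose proof (Rmax_r Mf Mg).
    destruct (Hfi T ltac:(lra)) as [pf _], (Hgi T ltac:(lra)) as [pg _].
    rewrite (RiemannInt_P13 pf pg pr).
    specialize (HMf T pf ltac:(lra)). specialize (HMg T pg ltac:(lra)).
    replace (RiemannInt pf + l * RiemannInt pg - (Lf + l * Lg))
      with ((RiemannInt pf - Lf) + l * (RiemannInt pg - Lg)) by ring.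
    eapply Rle_lt_trans; [apply Rabs_triang|]. rewrite Rabs_mult.
    assert (Rabs l * Rabs (RiemannInt pg - Lg) <= Rabs l * e) by (apply Rmult_le_compat_l; lra).
    assert (e + Rabs l * e = eps / 2) by (unfold e; field; lra).
    lra.
Qed.

Lemma improper_integral_unique f L1 L2 :
  improper_integral_0_inf f L1 -> improper_integral_0_inf f L2 -> L1 = L2.
Proof.
  intros H1 H2.
  assert (H0 : Rabs (L1 + -1 * L2) <= 0).
  { apply (improper_integral_abs_le _ _ _ (improper_integral_lin f f L1 L2 (-1) H1 H2)).
    intros T pr HT. destruct (proj1 H1 T HT) as [p _].
    rewrite (RiemannInt_P13 p p pr). replace (RiemannInt p + -1 * RiemannInt p) with 0 by ring.
    rewrite Rabs_R0. lra. }
  assert (Hz : Rabs (L1 + -1 * L2) = 0) by (pose proof (Rabs_pos (L1 + -1 * L2)); lra).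
  apply Rabs_eq_0 in Hz. lra.
Qed.

Lemma continuity_pt_eps f x0 eps : continuity_pt f x0 -> 0 < eps ->
  exists d, 0 < d /\ forall x, Rabs (x - x0) < d -> Rabs (f x - f x0) < eps.
Proof.
  intros Hf Heps. destruct (Hf eps Heps) as [d [Hd H]]. exists d. split; auto.
  intros x Hx. destruct (Req_dec x x0) as [-> | Hne].
  - rewrite Rminus_diag, Rabs_R0. exact Heps.
  - apply (H x). split; [split; [exact I | auto] | exact Hx].
Qed.

Lemma improper_integral_pos p L z0 : continuity p ->
  (forall z, 0 <= z -> 0 <= p z) -> 0 < z0 -> 0 < p z0 ->
  improper_integral_0_inf p L -> 0 < L.
Proof.
  intros Hc Hnn Hz0 Hp HL.
  destruct (continuity_pt_eps p z0 (p z0 / 2) (Hc z0) ltac:(lra)) as [d [Hd Hnear]].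
  pose proof (Rmin_l (d / 2) (z0 / 2)). pose proof (Rmin_r (d / 2) (z0 / 2)).
  assert (Hr : 0 < Rmin (d / 2) (z0 / 2)) by (apply Rmin_pos; lra).
  set (r := Rmin (d / 2) (z0 / 2)) in *.
  set (a := z0 - r). set (b := z0 + r).
  apply Rlt_le_trans with (p z0 / 2 * (b - a)); [unfold a, b; nra|].
  apply (improper_integral_ge p L _ b HL). intros T pr HT.
  set (ri := continuity_Riemann_integrable p Hc).
  rewrite (RiemannInt_P5 pr (ri 0 T)), <- (RiemannInt_P26 (ri 0 b) (ri b T) (ri 0 T)),
    <- (RiemannInt_P26 (ri 0 a) (ri a b) (ri 0 b)).
  assert (H0a : 0 * (a - 0) <= RiemannInt (ri 0 a)).
  { apply RiemannInt_ge_const; [unfold a; lra|]. intros x Hx. apply Hnn; lra. }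
  assert (HbT : 0 * (T - b) <= RiemannInt (ri b T)).
  { apply RiemannInt_ge_const; [lra|]. intros x Hx. apply Hnn; unfold b in *; lra. }
  assert (Hab : p z0 / 2 * (b - a) <= RiemannInt (ri a b)).
  { apply RiemannInt_ge_const; [unfold a, b; lra|]. intros x Hx.
    assert (Hxd : Rabs (x - z0) < d) by (apply Rabs_def1; unfold a, b in Hx; lra).
    specialize (Hnear x Hxd). apply Rabs_def2 in Hnear. lra. }
  lra.
Qed.

Lemma gauss_tail_bound p K mu A : 0 < mu -> 0 <= K -> continuity p ->
  (forall z, 0 <= z -> Rabs (p z) <= K * z * exp (- (mu * (A + z ^ 2)))) ->
  forall S T (pr : Riemann_integrable p S T), 0 <= S <= T ->
  Rabs (RiemannInt pr) <= K * exp (- (mu * (A + S ^ 2))) / (2 * mu).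
Proof.
  intros Hmu HK Hc Hp S T pr HST.
  set (g := fun z => K * z * exp (- (mu * (A + z ^ 2)))).
  set (G := fun z => - (K * exp (- (mu * (A + z ^ 2)))) / (2 * mu)).
  assert (Hg : forall x, derivable_pt_lim G x (g x)).
  { intro x. apply is_derive_Reals. unfold G, g. auto_derive; [easy|].
    replace (x * (x * 1)) with (x ^ 2) by ring. field; lra. }
  assert (Hgc : continuity g) by (intro x; apply continuity_pt_ex_derive; unfold g; auto_derive; exact I).
  assert (Hpa : continuity (fun z => Rabs (p z))).
  { intro x. apply (continuity_pt_comp p Rabs); [apply Hc | apply Rcontinuity_abs]. }
  apply Rle_trans with (RiemannInt (continuity_Riemann_integrable _ Hpa S T));
    [apply RiemannInt_P17; lra|].
  apply Rle_trans with (RiemannInt (continuity_Riemann_integrable _ Hgc S T)).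
  { apply RiemannInt_P19; [lra|]. intros x Hx. apply Hp. lra. }
  rewrite (RiemannInt_antiderivative g G S T) by (auto; lra).
  unfold G. pose proof (exp_pos (- (mu * (A + T ^ 2)))).
  assert (0 <= K * exp (- (mu * (A + T ^ 2))) / (2 * mu)) by (apply Rdiv_le_0_compat; nra).
  unfold Rdiv in *. lra.
Qed.

Lemma gauss_tail_vanishes K mu A eps : 0 <= K -> 0 < mu -> 0 <= A -> 0 < eps ->
  exists M, forall S, M <= S -> K * exp (- (mu * (A + S ^ 2))) / (2 * mu) < eps.
Proof.
  intros HK Hmu HA Heps. exists (Rmax 1 (K / (2 * mu * mu * eps))).
  intros S HS. pose proof (Rmax_l 1 (K / (2 * mu * mu * eps))).
  pose proof (Rmax_r 1 (K / (2 * mu * mu * eps))).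
  set (x := mu * (A + S ^ 2)).
  assert (Hx : K <= 2 * mu * eps * x).
  { assert (HK' : K = 2 * mu * eps * (mu * (K / (2 * mu * mu * eps)))) by (field; lra).
    assert (HxS : mu * (K / (2 * mu * mu * eps)) <= x).
    { unfold x. apply Rmult_le_compat_l; [lra|]. nra. }
    rewrite HK' at 1. apply Rmult_le_compat_l; nra. }
  assert (HE : exp (- x) * (1 + x) <= 1).
  { pose proof (exp_ineq1_le x). pose proof (exp_pos (- x)).
    assert (exp (- x) * exp x = 1) by (rewrite <- exp_plus, Rplus_opp_l; apply exp_0).
    nra. }
  pose proof (exp_pos (- x)).
  apply (Rmult_lt_reg_r (2 * mu)); [lra|]. unfold Rdiv.
  rewrite Rmult_assoc, Rinv_l, Rmult_1_r by lra.
  assert (0 <= x) by (unfold x; nra). nra.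
Qed.

Lemma improper_integral_gauss_dominated p K mu A : 0 < mu -> 0 <= K -> 0 <= A -> continuity p ->
  (forall z, 0 <= z -> Rabs (p z) <= K * z * exp (- (mu * (A + z ^ 2)))) ->
  exists L, improper_integral_0_inf p L.
Proof.
  intros Hmu HK HA Hc Hp.
  set (ri := continuity_Riemann_integrable p Hc).
  destruct (limit_at_infinity_of_cauchy (fun T => RiemannInt (ri 0 T))) as [L HL].
  - intros eps Heps. destruct (gauss_tail_vanishes K mu A eps HK Hmu HA Heps) as [M HM].
    exists (Rmax 0 M). intros S T HST. pose proof (Rmax_l 0 M). pose proof (Rmax_r 0 M).
    rewrite <- (RiemannInt_P26 (ri 0 S) (ri S T) (ri 0 T)).
    replace (_ + _ - _) with (RiemannInt (ri S T)) by ring.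
    eapply Rle_lt_trans; [apply (gauss_tail_bound p K mu A); auto; lra | apply HM; lra].
  - exists L. split.
    + intros T _. exists (ri 0 T). exact I.
    + intros eps Heps. destruct (HL eps Heps) as [M HM]. exists M. intros T pr HT.
      rewrite (RiemannInt_P5 pr (ri 0 T)). apply HM, HT.
Qed.

(** * Gaussian transforms *)

Section GaussTransform.

Variables A c : R.
Hypotheses (HA : 0 <= A) (Hc : 0 < c).

Definition gauss_admissible (q : R -> R) : Prop :=
  continuity q /\ forall nu, 0 < nu -> exists B, 0 <= B /\
    forall z, 0 <= z -> Rabs (q z) <= B * z * exp (nu * (A + z ^ 2)).

Definition gauss_kernel (q : R -> R) (tau z : R) : R :=
  q z * exp (- (tau * c * (A + z ^ 2))).

(* Junk unless the improper integral exists, which [gauss_transform_spec] guarantees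
   for admissible [q] and [tau > 0]. *)
Definition gauss_transform (q : R -> R) (tau : R) : R :=
  epsilon (inhabits 0) (fun L => improper_integral_0_inf (gauss_kernel q tau) L).

Definition dtau_weight (q : R -> R) (z : R) : R := q z * (- (c * (A + z ^ 2))).

Lemma continuity_gauss_kernel q tau : continuity q -> continuity (gauss_kernel q tau).
Proof.
  intros Hq x. apply (continuity_pt_mult q (fun z => exp (- (tau * c * (A + z ^ 2))))).
  - apply Hq.
  - apply continuity_pt_ex_derive. auto_derive. exact I.
Qed.

Lemma gauss_transform_spec q tau : 0 < tau -> gauss_admissible q ->
  improper_integral_0_inf (gauss_kernel q tau) (gauss_transform q tau).
Proof.
  intros Htau [Hq Hgrowth]. unfold gauss_transform. apply epsilon_spec.
  destruct (Hgrowth (tau * c / 2) ltac:(nra)) as [B [HB HqB]].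
  apply (improper_integral_gauss_dominated _ B (tau * c / 2) A); auto;
    [nra | apply continuity_gauss_kernel, Hq|].
  intros z Hz. unfold gauss_kernel.
  rewrite Rabs_mult, (Rabs_right (exp _)) by (left; apply exp_pos).
  eapply Rle_trans; [apply Rmult_le_compat_r; [left; apply exp_pos | apply HqB, Hz]|].
  rewrite Rmult_assoc, <- exp_plus. right. do 2 f_equal. field.
Qed.

Lemma gauss_admissible_dtau_weight q : gauss_admissible q -> gauss_admissible (dtau_weight q).
Proof.
  intros [Hq Hgrowth]. split.
  - intro x. apply (continuity_pt_mult q (fun z => - (c * (A + z ^ 2)))); [apply Hq|].
    apply continuity_pt_ex_derive. auto_derive. exact I.
  - intros nu Hnu. destruct (Hgrowth (nu / 2) ltac:(lra)) as [B [HB HqB]].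
    exists (B * c * (2 / nu)).
    split; [apply Rmult_le_pos; [nra | apply Rlt_le, Rdiv_lt_0_compat; lra]|].
    intros z Hz. unfold dtau_weight. set (w := A + z ^ 2).
    assert (Hw : 0 <= w) by (unfold w; nra).
    rewrite Rabs_mult, Rabs_Ropp, (Rabs_right (c * w)) by nra.
    pose proof (le_exp_div (nu / 2) w ltac:(lra)).
    apply Rle_trans with (B * z * exp (nu / 2 * w) * (c * (exp (nu / 2 * w) / (nu / 2)))).
    { apply Rmult_le_compat; [apply Rabs_pos | nra | apply HqB, Hz | nra]. }
    replace (nu * w) with (nu / 2 * w + nu / 2 * w) by field. rewrite exp_plus. right. field. lra.
Qed.

Lemma gauss_kernel_second_order q B tau tau0 z : 0 < tau0 -> 0 <= B ->
  (forall z, 0 <= z -> Rabs (q z) <= B * z * exp (tau0 * c / 8 * (A + z ^ 2))) ->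
  Rabs (tau - tau0) <= tau0 / 2 -> 0 <= z ->
  Rabs (gauss_kernel q tau z + -1 * gauss_kernel q tau0 z
        + - (tau - tau0) * gauss_kernel (dtau_weight q) tau0 z)
  <= (tau - tau0) ^ 2 * (B * (8 / tau0) ^ 2) * z * exp (- (tau0 * c / 8 * (A + z ^ 2))).
Proof.
  intros Htau0 HB HqB Htau Hz. set (y := c * (A + z ^ 2)).
  assert (Hy : 0 <= y) by (unfold y; nra).
  replace (gauss_kernel q tau z + -1 * gauss_kernel q tau0 z
           + - (tau - tau0) * gauss_kernel (dtau_weight q) tau0 z)
    with (q z * (exp (- (tau * y)) - exp (- (tau0 * y)) + (tau - tau0) * y * exp (- (tau0 * y))))
    by (unfold gauss_kernel, dtau_weight, y; rewrite !Rmult_assoc; ring).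
  rewrite Rabs_mult.
  eapply Rle_trans.
  { apply Rmult_le_compat; [apply Rabs_pos | apply Rabs_pos | apply HqB, Hz |].
    apply exp_second_order_bound; auto. }
  assert (E : exp (tau0 * c / 8 * (A + z ^ 2)) * exp (- (tau0 * y / 4))
              = exp (- (tau0 * c / 8 * (A + z ^ 2)))) by (rewrite <- exp_plus; f_equal; unfold y; field).
  rewrite <- E. right. ring.
Qed.

Lemma gauss_transform_second_order q tau0 : gauss_admissible q -> 0 < tau0 ->
  exists C, forall tau, Rabs (tau - tau0) <= tau0 / 2 ->
    Rabs (gauss_transform q tau - gauss_transform q tau0
          - (tau - tau0) * gauss_transform (dtau_weight q) tau0) <= C * (tau - tau0) ^ 2.
Proof.
  intros Hq Htau0. pose proof (gauss_admissible_dtau_weight q Hq) as Hq'.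
  set (mu := tau0 * c / 8). assert (Hmu : 0 < mu) by (unfold mu; nra).
  destruct (proj2 Hq mu Hmu) as [B [HB HqB]].
  exists (B * (8 / tau0) ^ 2 / (2 * mu)). intros tau Htau.
  assert (HK : 0 <= (tau - tau0) ^ 2 * (B * (8 / tau0) ^ 2))
    by (apply Rmult_le_pos; [| apply Rmult_le_pos]; auto; apply pow2_ge_0).
  assert (Htau_pos : 0 < tau) by (pose proof (Rle_abs (tau0 - tau)); rewrite Rabs_minus_sym in Htau; lra).
  pose proof (improper_integral_lin _ _ _ _ (- (tau - tau0))
    (improper_integral_lin _ _ _ _ (-1) (gauss_transform_spec q tau Htau_pos Hq)
       (gauss_transform_spec q tau0 Htau0 Hq))
    (gauss_transform_spec (dtau_weight q) tau0 Htau0 Hq')) as Hrem.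
  replace (gauss_transform q tau - gauss_transform q tau0
           - (tau - tau0) * gauss_transform (dtau_weight q) tau0)
    with (gauss_transform q tau + -1 * gauss_transform q tau0
          + - (tau - tau0) * gauss_transform (dtau_weight q) tau0) by ring.
  apply (improper_integral_abs_le _ _ _ Hrem). intros T pr HT.
  assert (Hcont : continuity (fun z => gauss_kernel q tau z + -1 * gauss_kernel q tau0 z
                                     + - (tau - tau0) * gauss_kernel (dtau_weight q) tau0 z)).
  { pose proof (continuity_gauss_kernel q tau (proj1 Hq)).
    pose proof (continuity_gauss_kernel q tau0 (proj1 Hq)).
    pose proof (continuity_gauss_kernel _ tau0 (proj1 Hq')).
    intro x. repeat apply continuity_pt_plus || apply continuity_pt_scal; auto. }
  eapply Rle_trans.
  { apply (gauss_tail_bound _ ((tau - tau0) ^ 2 * (B * (8 / tau0) ^ 2)) mu A Hmu);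
      [exact HK | exact Hcont | | lra].
    intros z Hz. apply gauss_kernel_second_order; auto. }
  assert (exp (- (mu * (A + 0 ^ 2))) <= 1) by (rewrite <- exp_0; apply exp_le_compat; nra).
  replace (B * (8 / tau0) ^ 2 / (2 * mu) * (tau - tau0) ^ 2)
    with ((tau - tau0) ^ 2 * (B * (8 / tau0) ^ 2) * 1 / (2 * mu)) by (field; lra).
  apply Rmult_le_compat_r; [left; apply Rinv_0_lt_compat; lra|]. apply Rmult_le_compat_l; auto.
Qed.

Lemma derivable_pt_lim_gauss_transform q tau : gauss_admissible q -> 0 < tau ->
  derivable_pt_lim (gauss_transform q) tau (gauss_transform (dtau_weight q) tau).
Proof.
  intros Hq Htau. destruct (gauss_transform_second_order q tau Hq Htau) as [C HC].
  apply (derivable_pt_lim_of_quadratic_remainder _ _ _ (tau / 2) C); [lra | exact HC].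
Qed.

Lemma gauss_transform_dtau_weight2_pos q tau z0 : gauss_admissible q -> 0 < tau ->
  (forall z, 0 <= z -> 0 <= q z) -> 0 < z0 -> 0 < q z0 ->
  0 < gauss_transform (dtau_weight (dtau_weight q)) tau.
Proof.
  intros Hq Htau Hnn Hz0 Hqz0.
  pose proof (gauss_admissible_dtau_weight _ (gauss_admissible_dtau_weight q Hq)) as Hq''.
  assert (Hk : forall z, gauss_kernel (dtau_weight (dtau_weight q)) tau z
                 = q z * (c * (A + z ^ 2)) ^ 2 * exp (- (tau * c * (A + z ^ 2))))
    by (intro z; unfold gauss_kernel, dtau_weight; ring).
  apply (improper_integral_pos _ _ z0 (continuity_gauss_kernel _ tau (proj1 Hq''))); auto.
  - intros z Hz. rewrite Hk. pose proof (exp_pos (- (tau * c * (A + z ^ 2)))).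
    pose proof (Hnn z Hz). pose proof (pow2_ge_0 (c * (A + z ^ 2))).
    apply Rmult_le_pos; [apply Rmult_le_pos|]; lra.
  - rewrite Hk. pose proof (exp_pos (- (tau * c * (A + z0 ^ 2)))).
    assert (0 < c * (A + z0 ^ 2)) by (apply Rmult_lt_0_compat; nra).
    apply Rmult_lt_0_compat; [apply Rmult_lt_0_compat; [| apply pow_lt] |]; lra.
  - apply gauss_transform_spec; auto.
Qed.

End GaussTransform.
(** * The functions f1star and f2star *)

(* [path_log] and [path_arg] are the real and imaginary parts of Log (g + t w) along the
   segment t in [0,1] from g to za g + i z. *)
Definition path_re (g t : R) : R := g + zb g * t.
Definition path_norm2 (g z t : R) : R := path_re g t ^ 2 + t ^ 2 * z ^ 2.
Definition path_log (g z t : R) : R := ln (path_norm2 g z t) / 2.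
Definition path_arg (g z t : R) : R := atan (t * z / path_re g t).

Lemma path_re_pos g t : 0 < g -> 0 <= t <= 1 -> 0 < path_re g t.
Proof. intros Hg Ht. unfold path_re, zb. nra. Qed.

Lemma path_norm2_pos g z t : 0 < g -> 0 <= t <= 1 -> 0 < path_norm2 g z t.
Proof. intros Hg Ht. pose proof (path_re_pos g t Hg Ht). unfold path_norm2. nra. Qed.

Lemma derivable_pt_lim_path_log g z t : 0 < g -> 0 <= t <= 1 ->
  derivable_pt_lim (path_log g z) t ((path_re g t * zb g + t * z ^ 2) / path_norm2 g z t).
Proof.
  intros Hg Ht. pose proof (path_norm2_pos g z t Hg Ht).
  apply is_derive_Reals. unfold path_log, path_norm2, path_re in *.
  auto_derive; [nra | field; nra].
Qed.

Lemma derivable_pt_lim_path_arg g z t : 0 < g -> 0 <= t <= 1 ->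
  derivable_pt_lim (path_arg g z) t (g * z / path_norm2 g z t).
Proof.
  intros Hg Ht. pose proof (path_re_pos g t Hg Ht). pose proof (path_norm2_pos g z t Hg Ht).
  apply is_derive_Reals. unfold path_arg, path_norm2, path_re in *.
  auto_derive; [lra | field; split; nra].
Qed.

Lemma path_re_0 g : path_re g 0 = g.
Proof. unfold path_re. ring. Qed.

Lemma path_re_1 g : path_re g 1 = za g.
Proof. unfold path_re, za, zb. field. Qed.

Lemma path_log_increment g z : 0 < g ->
  path_log g z 1 - path_log g z 0 = ln (/ g * sqrt (za g ^ 2 + z ^ 2)).
Proof.
  intros Hg. assert (Hw : 0 < za g ^ 2 + z ^ 2) by (unfold za; nra).
  assert (Hsqrt : ln (za g ^ 2 + z ^ 2) = 2 * ln (sqrt (za g ^ 2 + z ^ 2))).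
  { rewrite <- (sqrt_sqrt (za g ^ 2 + z ^ 2)) at 1 by lra.
    rewrite ln_mult by (apply sqrt_lt_R0, Hw). ring. }
  unfold path_log, path_norm2. rewrite path_re_0, path_re_1.
  rewrite ln_mult, ln_Rinv by (try apply Rinv_0_lt_compat; try apply sqrt_lt_R0; lra).
  replace (1 ^ 2 * z ^ 2) with (z ^ 2) by ring. replace (g ^ 2 + 0 ^ 2 * z ^ 2) with (g ^ 2) by ring.
  rewrite Hsqrt, ln_pow by exact Hg. simpl INR. field.
Qed.

Lemma path_arg_increment g z : 0 < g -> path_arg g z 1 - path_arg g z 0 = atan (z / za g).
Proof.
  intros Hg. unfold path_arg. rewrite path_re_0, path_re_1.
  replace (0 * z / g) with 0 by (field; lra). rewrite atan_0, Rmult_1_l. ring.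
Qed.

Lemma mean_value_unit_interval F h k : k <> 0 ->
  (forall t, 0 <= t <= 1 -> derivable_pt_lim F t (k * h t)) ->
  exists t, 0 < t < 1 /\ (F 1 - F 0) / k = h t.
Proof.
  intros Hk HF. destruct (MVT_cor2 F (fun t => k * h t) 0 1 ltac:(lra) HF) as [t [Ht Ht01]].
  exists t. split; [exact Ht01 | rewrite Ht; field; exact Hk].
Qed.

Definition f1_primitive (g z t : R) : R := zb g * path_log g z t + z * path_arg g z t.
Definition f2_primitive (g z t : R) : R := z * path_log g z t - zb g * path_arg g z t.

Lemma f1star_increment g z : 0 < g ->
  f1star g z = (f1_primitive g z 1 - f1_primitive g z 0) / (zb g ^ 2 + z ^ 2).
Proof.
  intros Hg. unfold f1star, f1_primitive.
  rewrite <- path_log_increment, <- path_arg_increment by exact Hg. unfold Rdiv. ring.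
Qed.

Lemma f2star_increment g z : 0 < g ->
  f2star g z = (f2_primitive g z 1 - f2_primitive g z 0) / (zb g ^ 2 + z ^ 2).
Proof.
  intros Hg. unfold f2star, f2_primitive.
  rewrite <- path_log_increment, <- path_arg_increment by exact Hg. unfold Rdiv. ring.
Qed.

Lemma derivable_pt_lim_f1_primitive g z t : 0 < g -> 0 <= t <= 1 ->
  derivable_pt_lim (f1_primitive g z) t ((zb g ^ 2 + z ^ 2) * (path_re g t / path_norm2 g z t)).
Proof.
  intros Hg Ht. pose proof (path_norm2_pos g z t Hg Ht).
  replace ((zb g ^ 2 + z ^ 2) * (path_re g t / path_norm2 g z t))
    with (zb g * ((path_re g t * zb g + t * z ^ 2) / path_norm2 g z t) + z * (g * z / path_norm2 g z t))
    by (unfold path_re; field; lra).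
  apply (derivable_pt_lim_plus (fun t => zb g * path_log g z t) (fun t => z * path_arg g z t));
    apply derivable_pt_lim_scal; [apply derivable_pt_lim_path_log | apply derivable_pt_lim_path_arg]; auto.
Qed.

Lemma derivable_pt_lim_f2_primitive g z t : 0 < g -> 0 <= t <= 1 ->
  derivable_pt_lim (f2_primitive g z) t ((zb g ^ 2 + z ^ 2) * (t * z / path_norm2 g z t)).
Proof.
  intros Hg Ht. pose proof (path_norm2_pos g z t Hg Ht).
  replace ((zb g ^ 2 + z ^ 2) * (t * z / path_norm2 g z t))
    with (z * ((path_re g t * zb g + t * z ^ 2) / path_norm2 g z t) - zb g * (g * z / path_norm2 g z t))
    by (unfold path_re; field; lra).
  apply (derivable_pt_lim_minus (fun t => z * path_log g z t) (fun t => zb g * path_arg g z t));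
    apply derivable_pt_lim_scal; [apply derivable_pt_lim_path_log | apply derivable_pt_lim_path_arg]; auto.
Qed.

Lemma f1star_mean g z : 0 < g -> zb g ^ 2 + z ^ 2 <> 0 ->
  exists t, 0 < t < 1 /\ f1star g z = path_re g t / path_norm2 g z t.
Proof.
  intros Hg Hz. rewrite f1star_increment by exact Hg.
  apply mean_value_unit_interval; auto. intros t Ht. apply derivable_pt_lim_f1_primitive; auto.
Qed.

Lemma f2star_mean g z : 0 < g -> zb g ^ 2 + z ^ 2 <> 0 ->
  exists t, 0 < t < 1 /\ f2star g z = t * z / path_norm2 g z t.
Proof.
  intros Hg Hz. rewrite f2star_increment by exact Hg.
  apply mean_value_unit_interval; auto. intros t Ht. apply derivable_pt_lim_f2_primitive; auto.
Qed.

Lemma f1star_nonneg g z : 0 < g -> 0 <= f1star g z.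
Proof.
  intros Hg. destruct (Req_dec (zb g ^ 2 + z ^ 2) 0) as [Hz | Hz].
  - unfold f1star. rewrite Hz, Rinv_0, Rmult_0_l. lra.
  - destruct (f1star_mean g z Hg Hz) as [t [Ht ->]].
    pose proof (path_re_pos g t Hg ltac:(lra)). pose proof (path_norm2_pos g z t Hg ltac:(lra)).
    apply Rlt_le, Rdiv_lt_0_compat; lra.
Qed.

Lemma f2star_pos g z : 0 < g -> 0 < z -> 0 < f2star g z.
Proof.
  intros Hg Hz. destruct (f2star_mean g z Hg ltac:(nra)) as [t [Ht ->]].
  pose proof (path_norm2_pos g z t Hg ltac:(lra)). apply Rdiv_lt_0_compat; nra.
Qed.

Lemma f2star_lt g z : 0 < g -> 0 < z -> f2star g z < z / Rmin g (1 / 2) ^ 2.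
Proof.
  intros Hg Hz. destruct (f2star_mean g z Hg ltac:(nra)) as [t [Ht ->]].
  pose proof (Rmin_l g (1 / 2)). pose proof (Rmin_r g (1 / 2)).
  assert (Hm : 0 < Rmin g (1 / 2)) by (apply Rmin_pos; lra).
  set (m := Rmin g (1 / 2)) in *.
  assert (Hp : m <= path_re g t) by (unfold path_re, zb; nra).
  assert (HQ : m ^ 2 <= path_norm2 g z t) by (unfold path_norm2; nra).
  apply Rle_lt_trans with (t * z / m ^ 2).
  - apply Rmult_le_compat_l; [nra|]. apply Rinv_le_contravar; nra.
  - apply Rmult_lt_compat_r; [apply Rinv_0_lt_compat; nra | nra].
Qed.

Lemma f2star_antitone g1 g2 z : 0 < g1 <= g2 -> 0 < z -> f2star g2 z <= f2star g1 z.
Proof.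
  intros Hg Hz.
  set (D1 := zb g1 ^ 2 + z ^ 2). set (D2 := zb g2 ^ 2 + z ^ 2).
  assert (HD1 : 0 < D1) by (unfold D1; nra). assert (HD2 : 0 < D2) by (unfold D2; nra).
  destruct (mean_value_unit_interval (fun t => f2_primitive g1 z t / D1 - f2_primitive g2 z t / D2)
              (fun t => t * z / path_norm2 g1 z t - t * z / path_norm2 g2 z t) 1) as [t [Ht Hdiff]].
  - lra.
  - intros t Ht. rewrite Rmult_1_l.
    pose proof (path_norm2_pos g1 z t ltac:(lra) Ht). pose proof (path_norm2_pos g2 z t ltac:(lra) Ht).
    replace (t * z / path_norm2 g1 z t - t * z / path_norm2 g2 z t)
      with (D1 * (t * z / path_norm2 g1 z t) / D1 - D2 * (t * z / path_norm2 g2 z t) / D2) by (field; lra).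
    apply (derivable_pt_lim_minus (fun t => f2_primitive g1 z t / D1) (fun t => f2_primitive g2 z t / D2));
      apply derivable_pt_lim_div_scal, derivable_pt_lim_f2_primitive; lra.
  - rewrite (f2star_increment g1), (f2star_increment g2) by lra. fold D1 D2.
    assert (Hp : path_re g1 t <= path_re g2 t) by (unfold path_re, zb; nra).
    pose proof (path_re_pos g1 t ltac:(lra) ltac:(lra)).
    pose proof (path_norm2_pos g1 z t ltac:(lra) ltac:(lra)).
    assert (HQ : path_norm2 g1 z t <= path_norm2 g2 z t) by (unfold path_norm2; nra).
    assert (/ path_norm2 g2 z t <= / path_norm2 g1 z t) by (apply Rinv_le_contravar; lra).
    assert (Hd : 0 <= t * z / path_norm2 g1 z t - t * z / path_norm2 g2 z t)
      by (unfold Rdiv; assert (0 <= t * z) by nra; nra).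
    rewrite <- Hdiff in Hd. lra.
Qed.

(** * Zhu's boundary *)

Definition zhu_weight (g z : R) : R :=
  z / (za g ^ 2 + z ^ 2) * exp (- f1star g z) * sin (f2star g z).

Lemma zhu_weight_linear_bound g z : 0 < g -> Rabs (zhu_weight g z) <= / za g ^ 2 * Rabs z.
Proof.
  intros Hg. assert (Ha : 0 < za g ^ 2) by (unfold za; nra).
  unfold zhu_weight. rewrite !Rabs_mult.
  assert (H1 : Rabs (z / (za g ^ 2 + z ^ 2)) <= / za g ^ 2 * Rabs z).
  { unfold Rdiv. rewrite Rabs_mult, Rabs_inv, (Rabs_right (za g ^ 2 + z ^ 2)), (Rmult_comm (Rabs z)) by nra.
    apply Rmult_le_compat_r; [apply Rabs_pos | apply Rinv_le_contravar; nra]. }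
  assert (H2 : Rabs (exp (- f1star g z)) <= 1).
  { rewrite Rabs_right, <- exp_0 by (left; apply exp_pos).
    apply exp_le_compat. pose proof (f1star_nonneg g z Hg). lra. }
  assert (H3 : Rabs (sin (f2star g z)) <= 1) by (apply Rabs_le, SIN_bound).
  rewrite <- (Rmult_1_r (/ za g ^ 2 * Rabs z)), <- (Rmult_1_r (/ za g ^ 2 * Rabs z * 1)).
  repeat apply Rmult_le_compat; auto; try apply Rabs_pos; apply Rmult_le_pos; apply Rabs_pos.
Qed.

Lemma continuity_zhu_weight g : 0 < g -> continuity (zhu_weight g).
Proof.
  intros Hg z. destruct (Req_dec z 0) as [-> | Hz].
  (* For g = 1 the factors f1* and f2* are junk at 0 (division by zb g^2 + 0^2 = 0);
     the prefactor z makes the weight continuous there anyway. *)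
  - apply (continuity_pt_0_of_linear_bound _ (/ za g ^ 2)). intro x. apply zhu_weight_linear_bound, Hg.
  - assert (Ha : 0 < za g) by (unfold za; lra).
    apply continuity_pt_ex_derive. unfold zhu_weight, f1star, f2star.
    assert (Hw : 0 < za g * (za g * 1) + z * (z * 1)) by nra.
    assert (Hs : 0 < / g * sqrt (za g * (za g * 1) + z * (z * 1)))
      by (apply Rmult_lt_0_compat; [apply Rinv_0_lt_compat, Hg | apply sqrt_lt_R0, Hw]).
    auto_derive. repeat split; auto; nra.
Qed.

Lemma gauss_admissible_zhu_weight g : 0 < g -> gauss_admissible (za g ^ 2) (zhu_weight g).
Proof.
  intros Hg. split; [apply continuity_zhu_weight, Hg|].
  intros nu Hnu. exists (/ za g ^ 2). split; [apply Rlt_le, Rinv_0_lt_compat; unfold za; nra|].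
  intros z Hz. eapply Rle_trans; [apply zhu_weight_linear_bound, Hg|].
  rewrite Rabs_right by lra. rewrite Rmult_assoc.
  apply Rmult_le_compat_l; [apply Rlt_le, Rinv_0_lt_compat; unfold za; nra|].
  rewrite <- (Rmult_1_r z) at 1. apply Rmult_le_compat_l; [lra|].
  rewrite <- exp_0. apply exp_le_compat. unfold za. nra.
Qed.

Lemma zhu_weight_nonneg g : 0 < g -> (forall z, 0 < z -> f2star g z <= PI) ->
  forall z, 0 <= z -> 0 <= zhu_weight g z.
Proof.
  intros Hg Hpi z Hz. destruct (Req_dec z 0) as [-> | Hz0].
  - unfold zhu_weight. unfold Rdiv. rewrite !Rmult_0_l. lra.
  - assert (Hzpos : 0 < z) by lra.
    pose proof (f2star_pos g z Hg Hzpos). pose proof (Hpi z Hzpos).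
    unfold zhu_weight. repeat apply Rmult_le_pos.
    + lra.
    + apply Rlt_le, Rinv_0_lt_compat. nra.
    + apply Rlt_le, exp_pos.
    + apply sin_ge_0; lra.
Qed.

Lemma zhu_weight_pos_somewhere g : 0 < g -> exists z0, 0 < z0 /\ 0 < zhu_weight g z0.
Proof.
  intros Hg. assert (Hm : 0 < Rmin g (1 / 2)) by (apply Rmin_pos; lra).
  pose proof PI_RGT_0. set (z0 := Rmin g (1 / 2) ^ 2 * PI / 2).
  assert (Hz0 : 0 < z0) by (unfold z0; pose proof (pow_lt _ 2 Hm); nra).
  assert (Hf2 : f2star g z0 < PI).
  { eapply Rlt_trans; [apply f2star_lt; auto|].
    unfold z0. replace (Rmin g (1 / 2) ^ 2 * PI / 2 / Rmin g (1 / 2) ^ 2) with (PI / 2)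
      by (field; apply Rgt_not_eq; lra). lra. }
  pose proof (f2star_pos g z0 Hg Hz0).
  exists z0. split; [exact Hz0|]. unfold zhu_weight.
  apply Rmult_lt_0_compat; [apply Rmult_lt_0_compat|].
  - apply Rdiv_lt_0_compat; [lra | nra].
  - apply exp_pos.
  - apply sin_gt_0; lra.
Qed.


Lemma f2star_range g0 g : is_gamma0 g0 -> g0 <= g -> forall z, 0 < z -> 0 <= f2star g z <= PI.
Proof.
  intros [Hg0 [Hpi _]] Hle z Hz. split; [apply Rlt_le, f2star_pos; lra|].
  eapply Rle_trans; [apply (f2star_antitone g0 g z); lra | apply Hpi, Hz].
Qed.

Lemma zhu_integrand_gauss_kernel sigma g tau :
  zhu_integrand sigma g tau = gauss_kernel (za g ^ 2) (sigma ^ 2 / 2) (zhu_weight g) tau.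
Proof.
  apply functional_extensionality. intro z.
  unfold zhu_integrand, gauss_kernel, zhu_weight. unfold Rdiv. ring.
Qed.

Lemma rho_zhu_gauss_transform E sigma g rho tau : 0 < sigma -> 0 < g ->
  is_rho_zhu E sigma g rho -> 0 < tau ->
  rho tau = g * E / (1 + g)
            + 2 * E / PI * gauss_transform (za g ^ 2) (sigma ^ 2 / 2) (zhu_weight g) tau.
Proof.
  intros Hs Hg Hrho Htau. destruct (Hrho tau Htau) as [L [HL ->]].
  rewrite zhu_integrand_gauss_kernel in HL.
  assert (Hc : 0 < sigma ^ 2 / 2) by (pose proof (pow_lt sigma 2 Hs); lra).
  rewrite (improper_integral_unique _ _ _ HL (gauss_transform_spec _ _ (pow2_ge_0 (za g)) Hc _ _ Htau
             (gauss_admissible_zhu_weight g Hg))).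
  reflexivity.
Qed.

Lemma derivable_pt_lim_rho_zhu E sigma g rho tau : 0 < sigma -> 0 < g ->
  is_rho_zhu E sigma g rho -> 0 < tau ->
  derivable_pt_lim rho tau (2 * E / PI * gauss_transform (za g ^ 2) (sigma ^ 2 / 2)
                                          (dtau_weight (za g ^ 2) (sigma ^ 2 / 2) (zhu_weight g)) tau).
Proof.
  intros Hs Hg Hrho Htau.
  assert (Hc : 0 < sigma ^ 2 / 2) by (pose proof (pow_lt sigma 2 Hs); lra).
  set (F := gauss_transform (za g ^ 2) (sigma ^ 2 / 2) (zhu_weight g)).
  apply (derivable_pt_lim_locally_eq (fun t => g * E / (1 + g) + 2 * E / PI * F t)).
  - rewrite <- (Rplus_0_l (2 * E / PI * _)).
    apply (derivable_pt_lim_plus (fun _ => g * E / (1 + g)) (fun t => 2 * E / PI * F t));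
      [apply derivable_pt_lim_const | apply derivable_pt_lim_scal].
    apply derivable_pt_lim_gauss_transform; auto using pow2_ge_0, gauss_admissible_zhu_weight.
  - exists tau. split; [exact Htau|]. intros y Hy.
    apply rho_zhu_gauss_transform; auto. apply Rabs_def2 in Hy. lra.
Qed.

Theorem mainTheorem3 (E r sigma g0 : R) :
  0 < E -> 0 < r -> 0 < sigma ->
  is_gamma0 g0 ->
  g0 <= 2 * r / sigma ^ 2 ->
  let g := 2 * r / sigma ^ 2 in
  (forall z, 0 < z -> 0 <= f2star g z <= PI) /\
  (forall tau, 0 < tau -> exists L,
      improper_integral_0_inf (zhu_integrand sigma g tau) L) /\
  (forall rho : R -> R, is_rho_zhu E sigma g rho ->
     exists d1 d2 : R -> R,
       (forall tau, 0 < tau -> derivable_pt_lim rho tau (d1 tau)) /\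
       (forall tau, 0 < tau -> derivable_pt_lim d1 tau (d2 tau)) /\
       (forall tau, 0 < tau -> 0 < d2 tau)).
Proof.
  intros HE Hr Hs Hgamma0 Hle g.
  assert (Hg : 0 < g) by (unfold g; apply Rdiv_lt_0_compat; [lra | apply pow_lt, Hs]).
  set (A := za g ^ 2). set (c := sigma ^ 2 / 2). set (q := zhu_weight g). set (K := 2 * E / PI).
  assert (HA : 0 <= A) by apply pow2_ge_0.
  assert (Hc : 0 < c) by (unfold c; pose proof (pow_lt sigma 2 Hs); lra).
  assert (HK : 0 < K) by (apply Rdiv_lt_0_compat; [lra | apply PI_RGT_0]).
  pose proof (gauss_admissible_zhu_weight g Hg) as Hq.
  pose proof (gauss_admissible_dtau_weight A c HA Hc q Hq) as Hq'.
  split; [|split].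
  - exact (f2star_range g0 g Hgamma0 Hle).
  - intros tau Htau. exists (gauss_transform A c q tau).
    rewrite zhu_integrand_gauss_kernel. apply gauss_transform_spec; auto.
  - intros rho Hrho.
    exists (fun tau => K * gauss_transform A c (dtau_weight A c q) tau),
           (fun tau => K * gauss_transform A c (dtau_weight A c (dtau_weight A c q)) tau).
    split; [|split]; intros tau Htau.
    + apply derivable_pt_lim_rho_zhu; auto.
    + apply derivable_pt_lim_scal, derivable_pt_lim_gauss_transform; auto.
    + destruct (zhu_weight_pos_somewhere g Hg) as [z0 [Hz0 Hqz0]].
      apply Rmult_lt_0_compat; [exact HK|].
      apply (gauss_transform_dtau_weight2_pos A c HA Hc q tau z0); auto.
      apply zhu_weight_nonneg; [exact Hg|]. intros z Hz. exact (proj2 (f2star_range g0 g Hgamma0 Hle z Hz)).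
Qed.
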